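(* Let $R$ be a commutative ring in which $2$ is invertible, $I$ an ideal of $R$, let $Q=R$ with quadratic form $q(z)=z^2$, and let $m\ge1$. Identify automorphisms of $Q\perp\mathbb{H}(R)^m$ with matrices in $\mathrm{GL}_{2m+1}(R)$ via the ordered basis $(1,x_1,f_1,\dots,x_m,f_m)$. Then $\mathrm{EO}_{(R,I)}(Q,\mathbb{H}(R)^m)=\mathrm{EO}_{2m+1}(R,I)$.
   Context: For a quadratic form $q$ the bilinear form is $\langle x,y\rangle=q(x+y)-q(x)-q(y)$; on $Q=R$, $\langle z,z'\rangle=2zz'$. $\mathbb{H}(R)^m=\mathbb{H}(R^m)=R^m\oplus(R^m)^*$ with basis $x_1,\dots,x_m$, dual basis $f_1,\dots,f_m$, and $q(y,g)=g(y)$; orthogonal sums carry the sum of forms. With respect to the basis above the form has matrix $(2)\perp\widetilde{\psi}_m$, where $\widetilde{\psi}_s=\sum_{i=1}^s(e_{2i-1,2i}+e_{2i,2i-1})$ and $e_{i,j}$ are matrix units. DSER transformations on $Q\perp\mathbb{H}(P)$: for $\alpha:Q\to P$ let $\alpha^*:P^*\to Q$ satisfy $\langle\alpha^*(g),z\rangle=g(\alpha(z))$, $E_\alpha(z,y,g)=(z-\alpha^*(g),y+\alpha(z)-\tfrac12\alpha\alpha^*(g),g)$; for $\beta:Q\to P^*$ let $\beta^*:P\to Q$ satisfy $\langle\beta^*(y),z\rangle=\beta(z)(y)$, $E^*_\beta(z,y,g)=(z-\beta^*(y),y,g+\beta(z)-\tfrac12\beta\beta^*(y))$. $\mathrm{EO}_R(Q,\mathbb{H}(P))$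 is generated by all $E_\alpha,E^*_\beta$; $\mathrm{EO}_I(Q,\mathbb{H}(P))$ by those with $\alpha(Q)\subseteq IP$, $\beta(Q)\subseteq IP^*$; $\mathrm{EO}_{(R,I)}(Q,\mathbb{H}(P))$ is the normal closure of $\mathrm{EO}_I(Q,\mathbb{H}(P))$ in $\mathrm{EO}_R(Q,\mathbb{H}(P))$. Odd elementary orthogonal group: for $N=2s+1$ and $1\le i\le s$, $F^1_i(\lambda)=I_N+\lambda(e_{1,2i+1}-2e_{2i,1}-\lambda e_{2i,2i+1})$, $F^2_i(\lambda)=I_N+\lambda(e_{1,2i}-2e_{2i+1,1}-\lambda e_{2i+1,2i})$. $\mathrm{EO}_{2s+1}(R)$ is generated by these with $\lambda\in R$, $\mathrm{EO}_{2s+1}(I)$ by those with $\lambda\in I$, and $\mathrm{EO}_{2s+1}(R,I)$ is the normal closure of $\mathrm{EO}_{2s+1}(I)$ in $\mathrm{EO}_{2s+1}(R)$. *)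

From HB Require Import structures.
From mathcomp Require Import all_boot all_order all_algebra.
From mathcomp Require Import ring.
Unset Printing Implicit Defensive.
Import Order.TTheory GRing.Theory Num.Theory.
Local Open Scope ring_scope.

Section Defs.
Context {R : comUnitRingType}.

Inductive gen_grp (n : nat) (S : 'M[R]_n.+1 -> Prop) : 'M[R]_n.+1 -> Prop :=
| gen_one : gen_grp n S 1
| gen_mul s x : S s -> gen_grp n S x -> gen_grp n S (s * x)
| gen_inv s x : S s -> gen_grp n S x -> gen_grp n S (s^-1 * x).

Definition normal_closure (n : nat) (G H : 'M[R]_n.+1 -> Prop) : 'M[R]_n.+1 -> Prop :=
  gen_grp n (fun x => exists g h, [/\ G g, H h & x = g * h * g^-1]).

Definition is_ideal (I : R -> Prop) : Prop :=
  [/\ I 0, (forall x y, I x -> I y -> I (x + y)) & (forall r x, I x -> I (r * x))].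

(* elements (z, y, g) with z in Q = R, y in R^m (coordinates on x_1..x_m),
   g in (R^m)^* (coordinates on the dual basis f_1..f_m) *)
Definition QH (m : nat) := (R * 'rV[R]_m * 'rV[R]_m)%type.

Definition ev (m : nat) (g y : 'rV[R]_m) : R := \sum_(i < m) g 0 i * y 0 i.

Definition qQ (z : R) : R := z ^+ 2.
Definition bilQ (w z : R) : R := qQ (w + z) - qQ w - qQ z.

(* R-linear maps alpha : Q = R -> P = R^m are z |-> z *: a (a = alpha 1),
   R-linear maps beta : Q -> P^* are z |-> z *: b (b = beta 1). *)
Definition alpha_map (m : nat) (a : 'rV[R]_m) (z : R) : 'rV[R]_m := z *: a.
Definition beta_map (m : nat) (b : 'rV[R]_m) (z : R) : 'rV[R]_m := z *: b.

(* adjoints: <alpha^*(g), z> = g(alpha z) and <beta^*(y), z> = beta(z)(y);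
   since <w,z> = 2wz and 2 is invertible these are: *)
Definition alpha_star (m : nat) (a : 'rV[R]_m) (g : 'rV[R]_m) : R := 2^-1 * ev m g a.
Definition beta_star (m : nat) (b : 'rV[R]_m) (y : 'rV[R]_m) : R := 2^-1 * ev m b y.

Definition E_alpha (m : nat) (a : 'rV[R]_m) (v : QH m) : QH m :=
  let: (z, y, g) := v in
  (z - alpha_star m a g,
   y + alpha_map m a z - 2^-1 *: alpha_map m a (alpha_star m a g),
   g).

Definition E_beta (m : nat) (b : 'rV[R]_m) (v : QH m) : QH m :=
  let: (z, y, g) := v in
  (z - beta_star m b y,
   y,
   g + beta_map m b z - 2^-1 *: beta_map m b (beta_star m b y)).

Inductive bidx (m : nat) := BQ | BX of 'I_m | BF of 'I_m.
Arguments BQ {m}. Arguments BX {m}. Arguments BF {m}.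

(* position k (0-based) in the ordered basis (1, x_1, f_1, ..., x_m, f_m) *)
Definition decode (m : nat) (k : 'I_((2 * m).+1)) : bidx m :=
  if val k is j.+1 then
    match (insub (j./2) : option 'I_m) with
    | Some i => if odd j then BF i else BX i
    | None => BQ
    end
  else BQ.

Definition basis_vec (m : nat) (b : bidx m) : QH m :=
  match b with
  | BQ => (1, 0, 0)
  | BX i => (0, delta_mx 0 i, 0)
  | BF i => (0, 0, delta_mx 0 i)
  end.

Definition coord (m : nat) (v : QH m) (b : bidx m) : R :=
  match b with
  | BQ => v.1.1
  | BX i => v.1.2 0 i
  | BF i => v.2 0 i
  end.

Definition mx_of (m : nat) (T : QH m -> QH m) : 'M[R]_((2 * m).+1) :=
  \matrix_(r, c) coord m (T (basis_vec m (decode m c))) (decode m r).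

Definition EO_DSER_gens (m : nat) (I : R -> Prop) (M : 'M[R]_((2 * m).+1)) : Prop :=
  (exists a : 'rV[R]_m, (forall z i, I (alpha_map m a z 0 i)) /\ M = mx_of m (E_alpha m a))
  \/ (exists b : 'rV[R]_m, (forall z i, I (beta_map m b z 0 i)) /\ M = mx_of m (E_beta m b)).

Definition EO_DSER_R (m : nat) := gen_grp (2 * m) (EO_DSER_gens m (fun _ => True)).
Definition EO_DSER_I (m : nat) (I : R -> Prop) := gen_grp (2 * m) (EO_DSER_gens m I).
Definition EO_DSER_RI (m : nat) (I : R -> Prop) :=
  normal_closure (2 * m) (EO_DSER_R m) (EO_DSER_I m I).

(* matrix unit e_{i,j} with 1-based indices *)
Definition e_unit (s : nat) (i j : nat) : 'M[R]_((2 * s).+1) :=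
  delta_mx (inord i.-1) (inord j.-1).

Definition F1 (s i : nat) (l : R) : 'M[R]_((2 * s).+1) :=
  1%:M + l *: (e_unit s 1 (2 * i).+1 - 2 *: e_unit s (2 * i) 1
               - l *: e_unit s (2 * i) (2 * i).+1).

Definition F2 (s i : nat) (l : R) : 'M[R]_((2 * s).+1) :=
  1%:M + l *: (e_unit s 1 (2 * i) - 2 *: e_unit s (2 * i).+1 1
               - l *: e_unit s (2 * i).+1 (2 * i)).

Definition EO_odd_gens (s : nat) (I : R -> Prop) (M : 'M[R]_((2 * s).+1)) : Prop :=
  exists i l, [/\ (1 <= i <= s)%N, I l & (M = F1 s i l \/ M = F2 s i l)].

Definition EO_odd_R (s : nat) := gen_grp (2 * s) (EO_odd_gens s (fun _ => True)).
Definition EO_odd_I (s : nat) (I : R -> Prop) := gen_grp (2 * s) (EO_odd_gens s I).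
Definition EO_odd_RI (s : nat) (I : R -> Prop) :=
  normal_closure (2 * s) (EO_odd_R s) (EO_odd_I s I).

End Defs.

Lemma alpha_star_adj (R : comUnitRingType) (m : nat) (a g : 'rV[R]_m) (z : R) :
  (2 : R) \is a GRing.unit -> bilQ (alpha_star m a g) z = ev m g (alpha_map m a z).
Proof.
move=> u2; rewrite /bilQ /qQ /alpha_star /ev /alpha_map.
have -> : forall x y : R, (x + y) ^+ 2 - x ^+ 2 - y ^+ 2 = 2 * x * y.
  by move=> x w; ring.
rewrite mulrA mulrV // mul1r mulr_suml; apply: eq_bigr => i _.
by rewrite mxE; ring.
Qed.

Lemma beta_star_adj (R : comUnitRingType) (m : nat) (b y : 'rV[R]_m) (z : R) :
  (2 : R) \is a GRing.unit -> bilQ (beta_star m b y) z = ev m (beta_map m b z) y.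
Proof.
move=> u2; rewrite /bilQ /qQ /beta_star /ev /beta_map.
have -> : forall x y : R, (x + y) ^+ 2 - x ^+ 2 - y ^+ 2 = 2 * x * y.
  by move=> x w; ring.
rewrite mulrA mulrV // mul1r mulr_suml; apply: eq_bigr => i _.
by rewrite mxE; ring.
Qed.

(* In the basis (1, x_1, f_1, ..., x_m, f_m), let p, X and F be the columns of 1, of the x_i and of
   the f_i. The matrix of E_alpha for alpha(z) = z a is then
     1 + X a^T p^T - 1/2 p a F^T - 1/4 X a^T a F^T,
   and that of E_beta is the same with X and F exchanged. For a = -2l e_i these are exactly F^1_i(l)
   and F^2_i(l). A general a is reduced to multiples of the e_i by the identity
     E(a + b) = E(a) E(b) E(a/2) E(-b) E(-a/2) E(b),
   so for every ideal J the groups EO_J(Q, H(R)^m) and EO_{2m+1}(J) are generated by each other's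
   generators. Taking J = R and J = I, the two normal closures coincide. *)

From HB Require Import structures.
From mathcomp Require Import all_boot all_order all_algebra.
From mathcomp Require Import ring zify.
Import GRing.Theory.
Local Open Scope ring_scope.

Section BasisIndex.
Variable m : nat.

Definition bidx_pos (b : bidx m) : nat :=
  match b with BQ => 0 | BX i => (2 * i).+1 | BF i => (2 * i).+2 end.

Lemma bidx_pos_decode (k : 'I_(2 * m).+1) : bidx_pos (decode m k) = k.
Proof.
rewrite /decode; case: k => [[|j] lt_jN] //=.
case: insubP => [i _ /= val_i|]; last by rewrite ltn_half_double -mul2n; lia.
by have := odd_double_half j; case: (odd j) => /=; rewrite val_i -mul2n; lia.
Qed.

Lemma bidx_pos_inj : injective bidx_pos.
Proof.
by case=> [|i|i] [|j|j] //= eq_ij; try lia; congr (_ _); apply: val_inj => /=; lia.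
Qed.

Lemma decode_inord (b : bidx m) : decode m (inord (bidx_pos b)) = b.
Proof.
apply: bidx_pos_inj; rewrite bidx_pos_decode inordK //.
by case: b => [|i|i] //=; have := ltn_ord i; lia.
Qed.

Definition bidx_eqb (b c : bidx m) : bool :=
  match b, c with
  | BQ, BQ => true
  | BX i, BX j | BF i, BF j => i == j
  | _, _ => false
  end.

Lemma eq_ord_decode (r c : 'I_(2 * m).+1) :
  (r == c) = bidx_eqb (decode m r) (decode m c).
Proof.
rewrite -(inj_eq (@ord_inj _)) -[val r]bidx_pos_decode -[val c]bidx_pos_decode.
case: (decode m r) => [|i|i]; case: (decode m c) => [|j|j] /=;
  rewrite ?eqSS ?eqn_pmul2l //; apply/eqP; lia.
Qed.

Lemma eq_inord_decode (r : 'I_(2 * m).+1) (b : bidx m) :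
  (r == inord (bidx_pos b)) = bidx_eqb (decode m r) b.
Proof. by rewrite eq_ord_decode decode_inord. Qed.

End BasisIndex.

Section DSERMatrices.
Variables (R : comUnitRingType) (n k : nat) (h : R).
Variables (X F : 'M[R]_(n.+1, k)) (p : 'cV[R]_n.+1).
Hypotheses (pX : p^T *m X = 0) (Fp : F^T *m p = 0) (FX : F^T *m X = 0).
Hypothesis pp : p^T *m p = 1%:M.

(* With h = 1/2, [dser h X F p a] is the matrix of E_alpha for alpha(z) = z a and [dser h F X p a]
   that of E_beta; the extra parameter C of [dser_mx] makes the family closed under products. *)
Definition dser_mx (a : 'rV_k) (C : 'M_k) : 'M[R]_n.+1 :=
  1%:M + X *m a^T *m p^T - h *: (p *m a *m F^T) + X *m C *m F^T.

Lemma dser_mx0 : dser_mx 0 0 = 1%:M.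
Proof. by rewrite /dser_mx !linear0 !(mulmx0, mul0mx, scaler0, subr0, addr0). Qed.

Lemma dser_mxM a C a' C' :
  dser_mx a C *m dser_mx a' C' = dser_mx (a + a') (C + C' - h *: (a^T *m a')).
Proof.
have mul_pX r (M : 'M_(r, 1)) : M *m p^T *m X = 0 by rewrite -mulmxA pX mulmx0.
have mul_Fp r (M : 'M_(r, k)) : M *m F^T *m p = 0 by rewrite -mulmxA Fp mulmx0.
have mul_FX r (M : 'M_(r, k)) : M *m F^T *m X = 0 by rewrite -mulmxA FX mulmx0.
have mul_pp r (M : 'M_(r, 1)) : M *m p^T *m p = M by rewrite -mulmxA pp mulmx1.
rewrite /dser_mx !(mulmxDl, mulmxDr, mulmxBl, mulmxBr, mul1mx, mulmx1).
rewrite ?(mulmxN, mulNmx) -?scalemxAl -?scalemxAr !mulmxA ?(mul_pX, mul_Fp, mul_FX, mul_pp).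
rewrite ?(mul0mx, mulmx0, scaler0, oppr0, scalerN, subr0, addr0).
rewrite !raddfD /= !(mulmxDl, mulmxBl, scalerDr, scalerBr) -!scalemxAl.
by apply/matrixP => i j; rewrite !mxE; ring.
Qed.

Definition dser (a : 'rV_k) : 'M[R]_n.+1 := dser_mx a (- h ^+ 2 *: (a^T *m a)).

Lemma dser_delta (j : 'I_k) (q x f : 'I_n.+1) c :
    p = delta_mx q 0 -> X *m ('e_j : 'rV_k)^T = delta_mx x 0 ->
    ('e_j : 'rV_k) *m F^T = delta_mx 0 f ->
  dser (c *: 'e_j) =
    1%:M + c *: delta_mx x q - (h * c) *: delta_mx q f - (h ^+ 2 * c ^+ 2) *: delta_mx x f.
Proof.
move=> pq Xe eF.
have XeQ : X *m ('e_j : 'rV_k)^T *m (delta_mx q 0)^T = delta_mx x q.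
  by rewrite Xe trmx_delta mul_delta_mx.
have QeF : delta_mx q 0 *m ('e_j : 'rV_k) *m F^T = delta_mx q f by rewrite -mulmxA eF mul_delta_mx.
have XeeF : X *m (('e_j : 'rV_k)^T *m 'e_j) *m F^T = delta_mx x f.
  by rewrite mulmxA Xe -mulmxA eF mul_delta_mx.
rewrite /dser /dser_mx pq !linearZ /= -!scalemxAl -!scalemxAr XeQ QeF -scalemxAl XeeF.
by apply/matrixP => r s; rewrite !mxE; ring.
Qed.

Lemma dser0 : dser 0 = 1%:M.
Proof. by rewrite /dser mulmx0 scaler0 dser_mx0. Qed.

Hypothesis h2 : 2 * h = 1.

Let one_sub_2h_mul (Q : R) : (1 - 2 * h) * Q = 0.
Proof. by rewrite h2 subrr mul0r. Qed.

Lemma dser_mulN a : dser a *m dser (- a) = 1%:M.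
Proof.
rewrite /dser dser_mxM subrr -dser_mx0; congr dser_mx.
apply/matrixP => i j; rewrite !mxE !big_ord1 !mxE.
by rewrite -(one_sub_2h_mul (h * (a 0 i * a 0 j))); ring.
Qed.

Lemma dser_inv a : (dser a)^-1 = dser (- a).
Proof.
have mulN : dser a * dser (- a) = 1 by rewrite -mulmxE dser_mulN.
have Nmul : dser (- a) * dser a = 1 by rewrite -{2}[a]opprK -mulmxE dser_mulN.
have dser_unit : dser a \is a GRing.unit by apply/unitrP; exists (dser (- a)).
by rewrite -[LHS]mulr1 -mulN mulKr.
Qed.

(* [dser a * dser b] is [dser (a + b)] times a factor [dser_mx 0 C] with C skew-symmetric; in this
   six-term product these factors cancel. *)
Lemma dserD a b :
  dser (a + b) = dser a * dser b * dser (h *: a) * dser (- b) * dser (- (h *: a)) * dser b.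
Proof.
rewrite -!mulmxE /dser !dser_mxM; congr dser_mx.
  by apply/matrixP => i j; rewrite !mxE; ring.
apply/matrixP => i j; rewrite !mxE !big_ord1 !mxE; apply/subr0_eq.
rewrite -(one_sub_2h_mul (h * a 0 i * b 0 j - h * b 0 i * b 0 j - h ^+ 3 * a 0 i * a 0 j)).
ring.
Qed.

End DSERMatrices.

Arguments dser {R n k} h X F p a.
Arguments dser0 {R n k h X F p}.
Arguments dser_inv {R n k h X F p}.
Arguments dserD {R n k h X F p}.
Arguments dser_delta {R n k h X F p}.

Section GeneratedGroup.
Context {R : comUnitRingType} {n : nat}.
Implicit Types S T G H : 'M[R]_n.+1 -> Prop.

Lemma gen_grp_mul S x y : gen_grp n S x -> gen_grp n S y -> gen_grp n S (x * y).
Proof.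
elim=> [|s x' Ss _ IH|s x' Ss _ IH] Sy; first by rewrite mul1r.
- by rewrite -mulrA; apply: gen_mul => //; apply: IH.
- by rewrite -mulrA; apply: gen_inv => //; apply: IH.
Qed.

Lemma gen_grp1 S s : S s -> gen_grp n S s.
Proof. by move=> Ss; rewrite -[s]mulr1; apply: gen_mul => //; exact: gen_one. Qed.

Lemma gen_grp_sub S T :
    (forall s, S s -> gen_grp n T s /\ gen_grp n T s^-1) ->
  forall x, gen_grp n S x -> gen_grp n T x.
Proof.
move=> ST x; elim=> [|s x' Ss _ IH|s x' Ss _ IH]; first exact: gen_one.
- by apply: gen_grp_mul => //; case: (ST s Ss).
- by apply: gen_grp_mul => //; case: (ST s Ss).
Qed.

Lemma gen_grp_mono S T :
  (forall s, S s -> T s) -> forall x, gen_grp n S x -> gen_grp n T x.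
Proof.
move=> ST; apply: gen_grp_sub => s /ST Ts; split; first exact: gen_grp1.
by rewrite -[s^-1]mulr1; apply: gen_inv => //; exact: gen_one.
Qed.

Lemma normal_closure_mono G G' H H' :
    (forall g, G g -> G' g) -> (forall x, H x -> H' x) ->
  forall x, normal_closure n G H x -> normal_closure n G' H' x.
Proof.
move=> GG' HH'; apply: gen_grp_mono => _ [g [x [Gg Hx ->]]].
by exists g, x; split; [apply: GG' | apply: HH' |].
Qed.

Lemma normal_closure_iff G G' H H' :
    (forall g, G g <-> G' g) -> (forall x, H x <-> H' x) ->
  forall x, normal_closure n G H x <-> normal_closure n G' H' x.
Proof.
by move=> GG' HH' x; split; apply: normal_closure_mono => y; rewrite ?GG' ?HH'.
Qed.

End GeneratedGroup.

Section RowDecomposition.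
Context {R : comUnitRingType} {n m : nat} {h : R}.
Context {S : 'M[R]_n.+1 -> Prop} {Phi : 'rV[R]_m -> 'M[R]_n.+1}.
Hypothesis Phi0 : Phi 0 = 1%:M.
Hypothesis PhiD : forall a b,
  Phi (a + b) = Phi a * Phi b * Phi (h *: a) * Phi (- b) * Phi (- (h *: a)) * Phi b.

(* Along the coordinate decomposition of [a], the six-term identity only ever needs [Phi] at
   multiples of the summands, hence the induction predicate [scalable]. *)
Lemma gen_grp_row_from_delta (J : R -> Prop) : is_ideal J ->
    (forall j c, J c -> gen_grp n S (Phi (c *: 'e_j))) ->
  forall a : 'rV_m, (forall j, J (a 0 j)) -> gen_grp n S (Phi a).
Proof.
move=> [_ _ J_mul] S_e a Ja.
pose scalable v := forall c, gen_grp n S (Phi (c *: v)).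
suff /(_ 1) : scalable a by rewrite scale1r.
rewrite [a]row_sum_delta; apply: big_ind => [c|u v Su Sv c|j _ c].
- by rewrite scaler0 Phi0; exact: gen_one.
- rewrite scalerDr PhiD !scalerA -!scaleNr.
  by do !apply: gen_grp_mul; by [apply: Su | apply: Sv].
- by rewrite scalerA; apply: S_e; apply: J_mul.
Qed.

End RowDecomposition.

Lemma mul_col_rowE (R : pzSemiRingType) p q (u : 'M[R]_(p, 1)) (v : 'M[R]_(1, q)) i j :
  (u *m v) i j = u i 0 * v 0 j.
Proof. by rewrite mxE big_ord1. Qed.

Lemma mx_addE (R : nmodType) p q (A B : 'M[R]_(p, q)) i j : (A + B) i j = A i j + B i j.
Proof. by rewrite mxE. Qed.

Lemma mx_oppE (R : zmodType) p q (A : 'M[R]_(p, q)) i j : (- A) i j = - A i j.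
Proof. by rewrite mxE. Qed.

Lemma mx_scaleE (R : pzRingType) p q (c : R) (A : 'M[R]_(p, q)) i j :
  (c *: A) i j = c * A i j.
Proof. by rewrite mxE. Qed.

Lemma ev_deltal (R : comUnitRingType) m (j : 'I_m) (a : 'rV[R]_m) : ev m 'e_j a = a 0 j.
Proof.
rewrite /ev (bigD1 j) //= mxE !eqxx mul1r big1 ?addr0 // => i ij.
by rewrite mxE eqxx (negbTE ij) mul0r.
Qed.

Lemma ev_deltar (R : comUnitRingType) m (j : 'I_m) (a : 'rV[R]_m) : ev m a 'e_j = a 0 j.
Proof.
rewrite /ev (bigD1 j) //= mxE !eqxx mulr1 big1 ?addr0 // => i ij.
by rewrite mxE eqxx (negbTE ij) mulr0.
Qed.

Lemma ev0r (R : comUnitRingType) m (a : 'rV[R]_m) : ev m a 0 = 0.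
Proof. by rewrite /ev big1 // => i _; rewrite mxE mulr0. Qed.

Lemma ev0l (R : comUnitRingType) m (a : 'rV[R]_m) : ev m 0 a = 0.
Proof. by rewrite /ev big1 // => i _; rewrite mxE mul0r. Qed.

Section Coordinates.
Context {R : comUnitRingType} {m : nat}.
Local Notation N := (2 * m).+1.

Definition colQ : 'cV[R]_N := delta_mx 0 0.
Definition colsX : 'M[R]_(N, m) :=
  \matrix_(k, i) if decode m k is BX j then (j == i)%:R else 0.
Definition colsF : 'M[R]_(N, m) :=
  \matrix_(k, i) if decode m k is BF j then (j == i)%:R else 0.

Lemma colQE k i : colQ k i = if decode m k is BQ then 1 else 0.
Proof.
rewrite mxE ord1 eqxx andbT (eq_ord_decode m k 0).
by case: (decode m k).
Qed.

Lemma mulQtX : colQ^T *m colsX = 0.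
Proof.
apply/matrixP => i j; rewrite !mxE; apply: big1 => k _.
by rewrite mxE colQE mxE; case: (decode m k) => *; rewrite ?mul0r ?mulr0.
Qed.

Lemma mulQtF : colQ^T *m colsF = 0.
Proof.
apply/matrixP => i j; rewrite !mxE; apply: big1 => k _.
by rewrite mxE colQE mxE; case: (decode m k) => *; rewrite ?mul0r ?mulr0.
Qed.

Lemma mulXtQ : colsX^T *m colQ = 0.
Proof. by rewrite -[LHS]trmxK trmx_mul trmxK mulQtX linear0. Qed.

Lemma mulFtQ : colsF^T *m colQ = 0.
Proof. by rewrite -[LHS]trmxK trmx_mul trmxK mulQtF linear0. Qed.

Lemma mulFtX : colsF^T *m colsX = 0.
Proof.
apply/matrixP => i j; rewrite !mxE; apply: big1 => k _.
by rewrite !mxE; case: (decode m k) => *; rewrite ?mul0r ?mulr0.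
Qed.

Lemma mulXtF : colsX^T *m colsF = 0.
Proof. by rewrite -[LHS]trmxK trmx_mul trmxK mulFtX linear0. Qed.

Lemma mulQtQ : colQ^T *m colQ = 1%:M.
Proof.
apply/matrixP => i j; rewrite !ord1 !mxE (bigD1 0) //= big1 => [|k /negbTE].
  by rewrite !mxE !eqxx mulr1 addr0.
by rewrite !mxE eqxx !andbT => ->; rewrite mulr0.
Qed.

Definition alpha_mx (a : 'rV[R]_m) : 'M[R]_N := dser 2^-1 colsX colsF colQ a.
Definition beta_mx (a : 'rV[R]_m) : 'M[R]_N := dser 2^-1 colsF colsX colQ a.

Let sum_delta (j : 'I_m) (G : 'I_m -> R) : \sum_i (j == i)%:R * G i = G j.
Proof.
rewrite (bigD1 j) //= eqxx mul1r big1 ?addr0 // => i.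
by rewrite eq_sym => /negbTE ->; rewrite mul0r.
Qed.

Let sum_deltar (j : 'I_m) (G : 'I_m -> R) : \sum_i G i * (j == i)%:R = G j.
Proof. by rewrite -[RHS](sum_delta j); apply: eq_bigr => i _; rewrite mulrC. Qed.

Let sum0 (G : 'I_m -> R) : \sum_i G i * 0 = 0.
Proof. by apply: big1 => i _; rewrite mulr0. Qed.

Let sum0l (G : 'I_m -> R) : \sum_i 0 * G i = 0.
Proof. by apply: big1 => i _; rewrite mul0r. Qed.

Lemma mulX_mxE p (M : 'M_(m, p)) r c :
  (colsX *m M) r c = if decode m r is BX j then M j c else 0.
Proof.
rewrite mxE; under eq_bigr do rewrite mxE.
by case: (decode m r) => [|j|j]; rewrite ?sum0l ?sum_delta.
Qed.

Lemma mulF_mxE p (M : 'M_(m, p)) r c :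
  (colsF *m M) r c = if decode m r is BF j then M j c else 0.
Proof.
rewrite mxE; under eq_bigr do rewrite mxE.
by case: (decode m r) => [|j|j]; rewrite ?sum0l ?sum_delta.
Qed.

Lemma mul_mx_trXE p (M : 'M_(p, m)) r c :
  (M *m colsX^T) r c = if decode m c is BX j then M r j else 0.
Proof.
rewrite mxE; under eq_bigr do rewrite !mxE.
by case: (decode m c) => [|j|j]; rewrite ?sum0 ?sum_deltar.
Qed.

Lemma mul_mx_trFE p (M : 'M_(p, m)) r c :
  (M *m colsF^T) r c = if decode m c is BF j then M r j else 0.
Proof.
rewrite mxE; under eq_bigr do rewrite !mxE.
by case: (decode m c) => [|j|j]; rewrite ?sum0 ?sum_deltar.
Qed.

Lemma mx_of_E_alpha (a : 'rV[R]_m) : mx_of m (E_alpha m a) = alpha_mx a.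
Proof.
apply/matrixP => r c; rewrite /mx_of mxE /alpha_mx /dser /dser_mx.
rewrite !(mx_addE, mx_oppE, mx_scaleE) [1%:M r c]mxE eq_ord_decode.
case dec_c: (decode m c) => [|j|j]; case dec_r: (decode m r) => [|i|i] /=;
  rewrite ?(mul_mx_trFE, mul_mx_trXE, mul_col_rowE, mulX_mxE, mulF_mxE, dec_r, dec_c) /=;
  rewrite /alpha_star /alpha_map ?ev_deltal ?ev0l !mxE ?big_ord1 ?mxE;
  by rewrite ?eqxx ?andbT ?eq_ord_decode ?dec_r ?dec_c /=; ring.
Qed.

Lemma mx_of_E_beta (a : 'rV[R]_m) : mx_of m (E_beta m a) = beta_mx a.
Proof.
apply/matrixP => r c; rewrite /mx_of mxE /beta_mx /dser /dser_mx.
rewrite !(mx_addE, mx_oppE, mx_scaleE) [1%:M r c]mxE eq_ord_decode.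
case dec_c: (decode m c) => [|j|j]; case dec_r: (decode m r) => [|i|i] /=;
  rewrite ?(mul_mx_trFE, mul_mx_trXE, mul_col_rowE, mulX_mxE, mulF_mxE, dec_r, dec_c) /=;
  rewrite /beta_star /beta_map ?ev_deltar ?ev0r !mxE ?big_ord1 ?mxE;
  by rewrite ?eqxx ?andbT ?eq_ord_decode ?dec_r ?dec_c /=; ring.
Qed.

Hypothesis two_unit : (2 : R) \is a GRing.unit.

Let two_half : 2 * 2^-1 = 1 :> R.
Proof. exact: mulrV. Qed.

Definition bidx_ord (b : bidx m) : 'I_N := inord (bidx_pos m b).

Lemma colQ_delta : colQ = delta_mx (bidx_ord (BQ m)) 0.
Proof. by congr delta_mx; apply: val_inj; rewrite /= inordK. Qed.

Lemma colsX_delta j : colsX *m ('e_j : 'rV_m)^T = delta_mx (bidx_ord (BX m j)) 0.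
Proof.
apply/matrixP => r c; rewrite mulX_mxE !mxE eq_inord_decode ord1 eqxx andbT.
by case: (decode m r) => //= i; rewrite !mxE eqxx eq_sym.
Qed.

Lemma colsF_delta j : colsF *m ('e_j : 'rV_m)^T = delta_mx (bidx_ord (BF m j)) 0.
Proof.
apply/matrixP => r c; rewrite mulF_mxE !mxE eq_inord_decode ord1 eqxx andbT.
by case: (decode m r) => //= i; rewrite !mxE eqxx eq_sym.
Qed.

Let half_mul_2 (l : R) : 2^-1 * - (2 * l) = - l.
Proof. by rewrite mulrN mulrA mulVr ?mul1r. Qed.

Lemma F1_alpha_mx (j : 'I_m) l : F1 m j.+1 l = alpha_mx (- (2 * l) *: 'e_j).
Proof.
rewrite /alpha_mx (dser_delta j (bidx_ord (BQ m)) (bidx_ord (BX m j)) (bidx_ord (BF m j))).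
- rewrite -exprMn half_mul_2 /F1 /e_unit mulnS add2n /bidx_ord /=.
  by apply/matrixP => r s; rewrite !mxE; ring.
- exact: colQ_delta.
- exact: colsX_delta.
- by rewrite -[LHS]trmxK trmx_mul trmxK colsF_delta trmx_delta.
Qed.

Lemma F2_beta_mx (j : 'I_m) l : F2 m j.+1 l = beta_mx (- (2 * l) *: 'e_j).
Proof.
rewrite /beta_mx (dser_delta j (bidx_ord (BQ m)) (bidx_ord (BF m j)) (bidx_ord (BX m j))).
- rewrite -exprMn half_mul_2 /F2 /e_unit mulnS add2n /bidx_ord /=.
  by apply/matrixP => r s; rewrite !mxE; ring.
- exact: colQ_delta.
- exact: colsF_delta.
- by rewrite -[LHS]trmxK trmx_mul trmxK colsX_delta trmx_delta.
Qed.

Context {J : R -> Prop}.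
Hypothesis J_ideal : is_ideal J.

Lemma alpha_mx_EO_odd :
  forall a : 'rV_m, (forall i, J (a 0 i)) -> EO_odd_I m J (alpha_mx a).
Proof.
apply: (gen_grp_row_from_delta dser0 (dserD mulQtX mulFtQ mulFtX mulQtQ two_half) _ J_ideal).
move=> j c Jc; apply: gen_grp1; exists j.+1, (- (2^-1 * c)); split.
- by rewrite ltn_ord.
- by rewrite -mulNr; case: J_ideal => _ _; apply.
- by left; rewrite F1_alpha_mx mulrN opprK mulrA two_half mul1r.
Qed.

Lemma beta_mx_EO_odd :
  forall b : 'rV_m, (forall i, J (b 0 i)) -> EO_odd_I m J (beta_mx b).
Proof.
apply: (gen_grp_row_from_delta dser0 (dserD mulQtF mulXtQ mulXtF mulQtQ two_half) _ J_ideal).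
move=> j c Jc; apply: gen_grp1; exists j.+1, (- (2^-1 * c)); split.
- by rewrite ltn_ord.
- by rewrite -mulNr; case: J_ideal => _ _; apply.
- by right; rewrite F2_beta_mx mulrN opprK mulrA two_half mul1r.
Qed.

Lemma DSER_gen_EO_odd M : EO_DSER_gens m J M -> EO_odd_I m J M /\ EO_odd_I m J M^-1.
Proof.
have J_opp (a : 'rV_m) : (forall i, J (a 0 i)) -> forall i, J ((- a) 0 i).
  by move=> Ja i; rewrite mxE -mulN1r; case: J_ideal => _ _; apply.
case=> [[a [Ja ->]] | [b [Jb ->]]].
- have {}Ja i : J (a 0 i) by move: (Ja 1 i); rewrite /alpha_map scale1r.
  rewrite mx_of_E_alpha (dser_inv mulQtX mulFtQ mulFtX mulQtQ two_half).
  by split; apply: alpha_mx_EO_odd => //; apply: J_opp.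
- have {}Jb i : J (b 0 i) by move: (Jb 1 i); rewrite /beta_map scale1r.
  rewrite mx_of_E_beta (dser_inv mulQtF mulXtQ mulXtF mulQtQ two_half).
  by split; apply: beta_mx_EO_odd => //; apply: J_opp.
Qed.

Lemma EO_odd_gen_DSER M : EO_odd_gens m J M -> EO_DSER_gens m J M.
Proof.
have [_ _ J_mul] := J_ideal.
case=> [[|i] [l [/andP [i_gt0 lt_im] Jl F_M]]] //.
pose j := Ordinal lt_im.
have J_coef z k : J ((z *: (- (2 * l) *: ('e_j : 'rV_m))) 0 k).
  suff -> : (z *: (- (2 * l) *: ('e_j : 'rV_m))) 0 k = (- (2 * z) * ('e_j : 'rV_m) 0 k) * l.
    exact: J_mul.
  by rewrite !mxE; ring.
case: F_M => ->.
- by left; exists (- (2 * l) *: 'e_j); rewrite mx_of_E_alpha (F1_alpha_mx j).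
- by right; exists (- (2 * l) *: 'e_j); rewrite mx_of_E_beta (F2_beta_mx j).
Qed.

Lemma EO_DSER_I_iff M : EO_DSER_I m J M <-> EO_odd_I m J M.
Proof.
split.
- by apply: gen_grp_sub => s /DSER_gen_EO_odd.
- by apply: gen_grp_mono => s /EO_odd_gen_DSER.
Qed.

End Coordinates.

Theorem mainTheorem5 (R : comUnitRingType) (m : nat) (I : R -> Prop) :
  (2 : R) \is a GRing.unit -> is_ideal I -> (1 <= m)%N ->
  forall M : 'M[R]_((2 * m).+1), EO_DSER_RI m I M <-> EO_odd_RI m I M.
Proof.
move=> two_unit I_ideal _.
have True_ideal : is_ideal (fun _ : R => True) by [].
exact: normal_closure_iff (EO_DSER_I_iff two_unit True_ideal) (EO_DSER_I_iff two_unit I_ideal).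
Qed.
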